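(* Let $(E,d)$ be a metric space with a Borel probability measure $\mu$, let $k\geq1$ and $\alpha_k:[0,\infty)\to[0,\infty)$. The following are equivalent: (1) For all Borel sets $A_1,\ldots,A_k\subset E$ with $(\mu(A_1),\ldots,\mu(A_k))\in\Delta_k$, the set $A=A_1\cup\cdots\cup A_k$ satisfies $\mu(A_r)\geq1-(1-\mu(A))\alpha_k(r)$ for all $0<r\leq\frac12\min_{i\neq j}d(A_i,A_j)$. (2) For all $1$-Lipschitz functions $f_1,\ldots,f_k:E\to\mathbb{R}$ such that the sets $A_i=\{f_i\leq0\}$ satisfy $(\mu(A_1),\ldots,\mu(A_k))\in\Delta_k$, the function $f^*=\min(f_1,\ldots,f_k)$ satisfies $\mu(f^*<r)\geq1-\mu(f^*>0)\,\alpha_k(r)$ for all $0<r\leq\frac12\min_{i\neq j}d(A_i,A_j)$.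
   Context: For $A,B\subset E$, $d(A,B)=\inf\{d(x,y):x\in A,y\in B\}$. For $A\subset E$ and $r>0$, $A_r=\{x\in E:\exists y\in A,\ d(x,y)<r\}$. $\Delta_k$ is the set of $(a_1,\ldots,a_k)\in[0,1]^k$ with $\sum_ja_j\leq1$ and $a_i+\sum_ja_j\geq1$ for every $i$. *)

From HB Require Import structures.
From mathcomp Require Import all_boot all_order all_algebra.
From mathcomp Require Import all_classical all_reals all_analysis.
Set Implicit Arguments. Unset Strict Implicit. Unset Printing Implicit Defensive.
Import Order.TTheory GRing.Theory Num.Theory.
Local Open Scope classical_set_scope.
Local Open Scope ring_scope.

Definition is_metric (R : realType) (E : Type) (dist : E -> E -> R) : Prop :=
  [/\ forall x y, 0 <= dist x y,
      forall x y, dist x y = 0 <-> x = y,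
      forall x y, dist x y = dist y x
    & forall x y z, dist x z <= dist x y + dist y z].

Definition metric_open (R : realType) (E : Type) (dist : E -> E -> R) :
  set (set E) :=
  [set U | forall x, U x -> exists2 e : R, 0 < e & [set y | dist x y < e] `<=` U].

Definition borel_space (R : realType) (E : pointedType) (dist : E -> E -> R) :=
  g_sigma_algebraType (metric_open dist).

(* d(A,B) = inf { d(x,y) : x in A, y in B }, valued in extended reals
   (inf of the empty set is +oo) *)
Definition set_dist (R : realType) (E : Type) (dist : E -> E -> R)
  (A B : set E) : \bar R :=
  ereal_inf [set (dist xy.1 xy.2)%:E | xy in A `*` B].

Definition enlarge (R : realType) (E : Type) (dist : E -> E -> R)
  (A : set E) (r : R) : set E :=
  [set x | exists2 y, A y & dist x y < r].

Definition Delta (R : realType) (k : nat) (a : 'I_k -> R) : Prop :=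
  [/\ forall i, 0 <= a i <= 1,
      \sum_(j < k) a j <= 1
    & forall i, 1 <= a i + \sum_(j < k) a j].

(* f^* = min(f_1,...,f_k), as an extended real (equal to +oo only if k = 0) *)
Definition fmin (R : realType) (E : Type) (k : nat) (f : 'I_k -> E -> R)
  (x : E) : \bar R :=
  \big[Order.min/+oo%E]_(i < k) (f i x)%:E.

Definition lipschitz1 (R : realType) (E : Type) (dist : E -> E -> R)
  (g : E -> R) : Prop :=
  forall x y, `|g x - g y| <= dist x y.

From HB Require Import structures.
From mathcomp Require Import all_boot all_order all_algebra.
From mathcomp Require Import all_classical all_reals all_analysis.
From mathcomp Require Import lra.
Set Implicit Arguments. Unset Strict Implicit. Unset Printing Implicit Defensive.
Import Order.TTheory GRing.Theory Num.Theory.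
Local Open Scope classical_set_scope.
Local Open Scope ring_scope.

(* (1) => (2): apply (1) to the sublevel sets {f_i <= 0}.  The complement of
   their union is {f* > 0}, and since the f_i are 1-Lipschitz the
   r-enlargement of the union lies in {f* < r}.
   (2) => (1): apply (2) to the truncated distances f_i = min(r, d(., A_i)).
   Their zero sets C_i are the closures of the A_i, hence as far apart as the
   A_i; in particular they are disjoint, so their larger masses still lie in
   Delta_k.  Moreover {f* < r} is exactly the r-enlargement of A, and as
   alpha >= 0 the bound for C_1 u ... u C_k implies the one for A. *)

Lemma Delta_le (R : realType) (k : nat) (a b : 'I_k -> R) :
  (forall i, a i <= b i) -> \sum_(j < k) b j <= 1 -> Delta a -> Delta b.
Proof.
move=> ab sumb [a01 _ a1]; have b0 i : 0 <= b i.
  by have /andP[a0 _] := a01 i; exact: le_trans (ab i).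
split=> // [i|i].
- rewrite b0 /=; apply: le_trans sumb.
  by rewrite (bigD1 i) //= lerDl sumr_ge0.
- by apply: le_trans (a1 i) _; rewrite lerD // ler_sum.
Qed.

Lemma fine_measure_bigcup_ord d (T : measurableType d) (R : realType)
    (mu : probability T R) (k : nat) (F : 'I_k -> set T) :
  (forall i, measurable (F i)) -> trivIset [set: 'I_k] F ->
  \sum_(i < k) fine (mu (F i)) = fine (mu (\bigcup_(i in [set: 'I_k]) F i)).
Proof.
move=> mF tF; rewrite measure_fin_bigcup //; last exact: finite_finset.
rewrite (fsbigE (enum 'I_k)) ?enum_uniq //; last by move=> i _; rewrite mem_enum.
rewrite -sum_fine; last by move=> i _; exact: fin_num_measure.
by rewrite big_enum_cond /=; apply: eq_bigl => i; rewrite in_setT.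
Qed.

Section Fmin.
Variables (R : realType) (E : Type) (k : nat) (f : 'I_k -> E -> R).

Lemma fmin_gt0E :
  [set x | (0 < fmin f x)%E] = ~` \bigcup_(i in [set: 'I_k]) [set x | f i x <= 0].
Proof.
apply/seteqP; split=> x /=.
  by move=> /bigmin_gtP[_ fx0] [i _ /=]; apply/negP; rewrite -ltNge -lte_fin fx0.
move=> fx0; apply/bigmin_gtP; split=> [|i _]; first exact: ltey.
by rewrite lte_fin ltNge; apply/negP => fi0; apply: fx0; exists i.
Qed.

Lemma fmin_ltE (c : R) :
  [set x | (fmin f x < c%:E)%E] = \bigcup_(i in [set: 'I_k]) [set x | f i x < c].
Proof.
apply/seteqP; split=> x /=.
  by move=> /bigmin_ltP[//|[i _ fic]]; exists i; rewrite //= -lte_fin.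
by move=> [i _ fic]; apply/bigmin_ltP; right; exists i; rewrite ?lte_fin.
Qed.

End Fmin.

Section Metric.
Variables (R : realType) (E : pointedType) (dist : E -> E -> R).
Hypothesis hdist : is_metric dist.

Let dist_ge0 x y : 0 <= dist x y. Proof. by case: hdist. Qed.
Let dist_xx x : dist x x = 0. Proof. by case: hdist => _ /(_ x x) [_ ->]. Qed.
Let dist_sym x y : dist x y = dist y x. Proof. by case: hdist. Qed.
Let dist_tri x y z : dist x z <= dist x y + dist y z. Proof. by case: hdist. Qed.

Lemma metric_open_measurable (U : set E) :
  metric_open dist U -> measurable (U : set (borel_space dist)).
Proof. exact: sub_gen_smallest. Qed.

Lemma lipschitz1_gt_open (g : E -> R) c :
  lipschitz1 dist g -> metric_open dist [set x | c < g x].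
Proof.
move=> gL x /= cgx; exists (g x - c); first by rewrite subr_gt0.
by move=> y /= xy; have := gL x y; rewrite ler_norml => /andP[_]; lra.
Qed.

Lemma lipschitz1_lt_open (g : E -> R) c :
  lipschitz1 dist g -> metric_open dist [set x | g x < c].
Proof.
move=> gL x /= gxc; exists (c - g x); first by rewrite subr_gt0.
by move=> y /= xy; have := gL x y; rewrite ler_norml => /andP[+ _]; lra.
Qed.

Lemma lipschitz1_le_measurable (g : E -> R) c : lipschitz1 dist g ->
  measurable ([set x | g x <= c] : set (borel_space dist)).
Proof.
move=> gL; have -> : [set x | g x <= c] = ~` [set x | c < g x].
  by apply/seteqP; split=> x /=; rewrite leNgt => /negP.
by apply: measurableC; apply: metric_open_measurable; exact: lipschitz1_gt_open.
Qed.

Lemma enlarge_open (A : set E) r : metric_open dist (enlarge dist A r).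
Proof.
move=> x [y Ay xy]; exists (r - dist x y); first by rewrite subr_gt0.
move=> z /= xz; exists y => //.
by have := dist_tri z x y; rewrite (dist_sym z x); lra.
Qed.

Lemma enlarge_bigcup (I : Type) (D : set I) (A : I -> set E) r :
  enlarge dist (\bigcup_(i in D) A i) r = \bigcup_(i in D) enlarge dist (A i) r.
Proof.
apply/seteqP; split=> x.
  by move=> [y [i Di Aiy] xy]; exists i => //; exists y.
by move=> [i Di [y Aiy xy]]; exists y => //; exists i.
Qed.

Lemma enlarge_sublevel_lipschitz1 (g : E -> R) r : lipschitz1 dist g ->
  enlarge dist [set x | g x <= 0] r `<=` [set x | g x < r].
Proof.
by move=> gL x [y /= gy0 xy]; have := gL x y; rewrite ler_norml => /andP[_]; lra.
Qed.

Lemma set_dist_le_adherent (A B C D : set E) :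
  (forall x, C x -> forall e, 0 < e -> exists2 y, A y & dist x y < e) ->
  (forall x, D x -> forall e, 0 < e -> exists2 y, B y & dist x y < e) ->
  (set_dist dist A B <= set_dist dist C D)%E.
Proof.
move=> CA DB; apply/ereal_infP => _ [[x y] [/= Cx Dy] <-].
apply/lee_addgt0Pr => e e0.
have [a Aa xa] := CA x Cx (e / 2) (divr_gt0 e0 (ltr0Sn _ 1)).
have [b Bb yb] := DB y Dy (e / 2) (divr_gt0 e0 (ltr0Sn _ 1)).
apply: le_trans (ereal_inf_lbound _) _; first by exists (a, b).
rewrite -EFinD lee_fin.
have := dist_tri a x b; have := dist_tri x y b; rewrite (dist_sym a x); lra.
Qed.

Lemma set_dist_gt0_disjoint (C D : set E) :
  (0 < set_dist dist C D)%E -> C `&` D = set0.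
Proof.
move=> CD0; apply/seteqP; split=> // x [Cx Dx].
have : (set_dist dist C D <= (dist x x)%:E)%E.
  by apply: ereal_inf_lbound; exists (x, x).
by rewrite dist_xx leNgt CD0.
Qed.

Section TruncDist.
Variables (A : set E) (r : R).
Hypothesis r_gt0 : 0 < r.

(* min(r, d(x, A)); truncating at r keeps the infimum meaningful for empty A *)
Definition trunc_dist (x : E) : R := inf ([set r] `|` [set dist x y | y in A]).

Let trunc_dist_le x s :
  ([set r] `|` [set dist x y | y in A]) s -> trunc_dist x <= s.
Proof.
apply: ge_inf; exists 0 => _ [->|[y _ <-]]; [exact: ltW | exact: dist_ge0].
Qed.

Lemma trunc_dist_le_r x : trunc_dist x <= r.
Proof. by apply: trunc_dist_le; left. Qed.

Lemma trunc_dist_le0 x : A x -> trunc_dist x <= 0.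
Proof.
by move=> Ax; rewrite -(dist_xx x); apply: trunc_dist_le; right; exists x.
Qed.

Lemma trunc_dist_ltP x e : e <= r ->
  trunc_dist x < e <-> exists2 y, A y & dist x y < e.
Proof.
move=> er; split; last first.
  by move=> [y Ay xy]; apply: le_lt_trans xy; apply: trunc_dist_le; right; exists y.
have ne : [set r] `|` [set dist x y | y in A] !=set0 by exists r; left.
by move=> /(inf_lt ne) [_ [->|[y Ay <-]] xye]; [lra | exists y].
Qed.

Lemma trunc_dist_lipschitz1 : lipschitz1 dist trunc_dist.
Proof.
suff le1 x y : trunc_dist x <= trunc_dist y + dist x y.
  move=> x y; rewrite ler_norml.
  by have := le1 x y; have := le1 y x; rewrite dist_sym; lra.
rewrite -lerBlDr; apply: lb_le_inf; first by exists r; left.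
move=> _ [->|[z Az <-]].
  by have := trunc_dist_le_r x; have := dist_ge0 x y; lra.
rewrite lerBlDr addrC; apply: le_trans (dist_tri x y z).
by apply: trunc_dist_le; right; exists z.
Qed.

Lemma trunc_dist_le0_adherent x : trunc_dist x <= 0 ->
  forall e, 0 < e -> exists2 y, A y & dist x y < e.
Proof.
move=> x0 e e0; have re : Num.min r e <= r by rewrite ge_min lexx.
have [|y Ay xy] := (trunc_dist_ltP x re).1.
  by apply: le_lt_trans x0 _; rewrite lt_min e0 r_gt0.
by exists y => //; apply: lt_le_trans xy _; rewrite ge_min lexx orbT.
Qed.

Lemma trunc_dist_ltE : [set x | trunc_dist x < r] = enlarge dist A r.
Proof. by apply/seteqP; split=> x /(trunc_dist_ltP x (lexx r)). Qed.

End TruncDist.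

End Metric.

Section Concentration.
Variables (R : realType) (E : pointedType) (dist : E -> E -> R).
Variables (mu : probability (borel_space dist) R) (k : nat) (alpha : R -> R).

Definition enlargement_bound : Prop :=
  forall A : 'I_k -> set (borel_space dist),
     (forall i, measurable (A i)) ->
     Delta (fun i => fine (mu (A i))) ->
     forall r : R, 0 < r ->
       (forall i j, i != j -> ((2 * r)%:E <= set_dist dist (A i) (A j))%E) ->
       (1 - (1 - mu (\bigcup_(i in [set: 'I_k]) A i)) * (alpha r)%:E
          <= mu (enlarge dist (\bigcup_(i in [set: 'I_k]) A i) r))%E.

Definition lipschitz_min_bound : Prop :=
  forall f : 'I_k -> E -> R,
     (forall i, lipschitz1 dist (f i)) ->
     Delta (fun i => fine (mu [set x | f i x <= 0])) ->
     forall r : R, 0 < r ->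
       (forall i j, i != j ->
          ((2 * r)%:E <= set_dist dist [set x | (f i x <= 0)%R]
                                       [set x | (f j x <= 0)%R])%E) ->
       (1 - mu [set x | (0 < fmin f x)%E] * (alpha r)%:E
          <= mu [set x | (fmin f x < r%:E)%E])%E.

Hypothesis hdist : is_metric dist.

Lemma lipschitz_min_bound_of_enlargement :
  enlargement_bound -> lipschitz_min_bound.
Proof.
move=> bound f fL fDelta r r_gt0 fsep.
pose A i : set (borel_space dist) := [set x | f i x <= 0].
have mA i : measurable (A i) by exact: lipschitz1_le_measurable.
have mU : measurable (\bigcup_(i in [set: 'I_k]) A i).
  by apply: fin_bigcup_measurable => //; exact: finite_finset.
rewrite fmin_gt0E probability_setC //.
apply: le_trans (bound A mA fDelta r r_gt0 fsep) _; apply: le_measure.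
- by rewrite inE; apply: metric_open_measurable; exact: enlarge_open.
- rewrite inE fmin_ltE; apply: fin_bigcup_measurable => [|i _].
    exact: finite_finset.
  by apply: metric_open_measurable; exact: lipschitz1_lt_open.
- rewrite fmin_ltE enlarge_bigcup; apply: subset_bigcup => i _.
  exact: enlarge_sublevel_lipschitz1.
Qed.

Hypothesis alpha_ge0 : forall r, 0 <= r -> 0 <= alpha r.

Lemma enlargement_bound_of_lipschitz_min :
  lipschitz_min_bound -> enlargement_bound.
Proof.
move=> bound A mA ADelta r r_gt0 Asep.
pose f i := trunc_dist dist (A i) r.
have fL i : lipschitz1 dist (f i) by exact: (trunc_dist_lipschitz1 hdist).
pose C i : set (borel_space dist) := [set x | f i x <= 0].
have mC i : measurable (C i) by exact: lipschitz1_le_measurable.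
have AC i : A i `<=` C i by move=> x; exact: (trunc_dist_le0 hdist).
have Csep i j : i != j -> ((2 * r)%:E <= set_dist dist (C i) (C j))%E.
  move=> ij; apply: le_trans (Asep i j ij) _.
  by apply: (set_dist_le_adherent hdist) => x;
    exact: (trunc_dist_le0_adherent hdist).
have Ctriv : trivIset [set: 'I_k] C.
  move=> i j _ _; have [//|ij] := eqVneq i j.
  have Csep0 : (0 < set_dist dist (C i) (C j))%E.
    by apply: lt_le_trans (Csep i j ij); rewrite lte_fin mulr_gt0.
  by rewrite (set_dist_gt0_disjoint hdist Csep0) => -[].
have mUA : measurable (\bigcup_(i in [set: 'I_k]) A i).
  by apply: fin_bigcup_measurable => //; exact: finite_finset.
have mUC : measurable (\bigcup_(i in [set: 'I_k]) C i).
  by apply: fin_bigcup_measurable => //; exact: finite_finset.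
have CDelta : Delta (fun i => fine (mu (C i))).
  apply: Delta_le ADelta => [i|].
    by apply: fine_le; rewrite ?fin_num_measure //; apply: le_measure; rewrite ?inE.
  rewrite fine_measure_bigcup_ord // -lee_fin fineK ?fin_num_measure //.
  exact: probability_le1.
have := bound f fL CDelta r r_gt0 Csep.
rewrite fmin_gt0E probability_setC // fmin_ltE.
rewrite (eq_bigcupr (fun i _ => trunc_dist_ltE hdist (A i) r_gt0)) -enlarge_bigcup.
apply: le_trans; apply: leeB => //; apply: lee_wpmul2r.
  by rewrite lee_fin alpha_ge0 // ltW.
apply: leeB => //; apply: le_measure; rewrite ?inE //.
by apply: subset_bigcup => i _; exact: AC.
Qed.

End Concentration.

Theorem proposition4p1 (R : realType) (E : pointedType) (dist : E -> E -> R)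
  (hdist : is_metric dist)
  (mu : probability (borel_space dist) R)
  (k : nat) (hk : (0 < k)%N)
  (alpha : R -> R) (halpha : forall r, 0 <= r -> 0 <= alpha r) :
  (forall A : 'I_k -> set (borel_space dist),
     (forall i, measurable (A i)) ->
     Delta (fun i => fine (mu (A i))) ->
     forall r : R, 0 < r ->
       (forall i j, i != j -> ((2 * r)%:E <= set_dist dist (A i) (A j))%E) ->
       (1 - (1 - mu (\bigcup_(i in [set: 'I_k]) A i)) * (alpha r)%:E
          <= mu (enlarge dist (\bigcup_(i in [set: 'I_k]) A i) r))%E)
  <->
  (forall f : 'I_k -> E -> R,
     (forall i, lipschitz1 dist (f i)) ->
     Delta (fun i => fine (mu [set x | f i x <= 0])) ->
     forall r : R, 0 < r ->
       (forall i j, i != j ->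
          ((2 * r)%:E <= set_dist dist [set x | (f i x <= 0)%R]
                                       [set x | (f j x <= 0)%R])%E) ->
       (1 - mu [set x | (0 < fmin f x)%E] * (alpha r)%:E
          <= mu [set x | (fmin f x < r%:E)%E])%E).
Proof.
split.
- exact: lipschitz_min_bound_of_enlargement.
- exact: enlargement_bound_of_lipschitz_min.
Qed.
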